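(* Let $A$ be an associative unital algebra over a commutative ring $k$ and $B$ a subalgebra with $L(A)\subseteq B\subseteq\mathrm{End}_k(A)$. Suppose $A^B$ is a domain and $A^B$ is large in $A$, and that either (1) $A$ is uniform as a left $A$-module (i.e. $\mathrm{udim}(A)=1$), or (2) $S=A^B\setminus\{0\}$ is left permutable in $A$ (for all $a\in A$ and $s\in S$ there exist $y\in S$ and $b\in A$ with $bs=ya$) and every $s\in S$ is a left non-zero divisor of $A$ (i.e. $sc=0$ with $c\in A$ implies $c=0$). Then $A$ is a critically compressible left $B$-module.
   Context: $L(A)=\{L_a:a\in A\}$, $L_a(x)=ax$; $A$ is a left $B$-module via $\varphi\cdot a=\varphi(a)$; its $B$-submodules are the $B$-stable left ideals. $A^B=\{a\in A: b\cdot a=(b\cdot1)a\ \forall b\in B\}$, which is isomorphic to $\mathrm{End}_B(A)$ via $f\mapsto(1)f$. $A^B$ is large in $A$ if $A^B\cap I\neq0$ for every nonzero $B$-submodule $I$ of $A$ (equivalently, $A$ is a retractable left $B$-module). A nonzero module is critically compressible if it embeds into each of its nonzero submodules and into none of its factor modules $M/N$ with $N\neq0$. *)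

From HB Require Import structures.
From mathcomp Require Import all_boot all_order all_algebra.
Set Implicit Arguments. Unset Strict Implicit. Unset Printing Implicit Defensive.
Import GRing.Theory.
Local Open Scope ring_scope.

Section Defs.
Variables (k : comPzRingType) (A : algType k).

Definition klinear (f : A -> A) : Prop :=
  (forall x y, f (x + y) = f x + f y) /\ (forall (c : k) x, f (c *: x) = c *: f x).

Definition subalg_End_containing_L (B : (A -> A) -> Prop) : Prop :=
  (forall f, B f -> klinear f) /\
  B id /\
  (forall f g, B f -> B g -> B (fun x => f x + g x)) /\
  (forall f, B f -> B (fun x => - f x)) /\
  (forall (c : k) f, B f -> B (fun x => c *: f x)) /\
  (forall f g, B f -> B g -> B (fun x => f (g x))) /\
  (forall a : A, B (fun x => a * x)).

(* B-submodules of the left B-module A (phi . a = phi a) *)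
Definition Bsubmodule (B : (A -> A) -> Prop) (I : A -> Prop) : Prop :=
  [/\ I 0, (forall x y, I x -> I y -> I (x + y)),
      (forall x, I x -> I (- x)) & (forall f x, B f -> I x -> I (f x))].

Definition nonzero_set (I : A -> Prop) : Prop := exists2 x, I x & x != 0.

Definition invariants (B : (A -> A) -> Prop) (a : A) : Prop :=
  forall f, B f -> f a = f 1 * a.

(* A^B is a domain (a nonzero ring without zero divisors; its unit is 1_A) *)
Definition invariants_domain (B : (A -> A) -> Prop) : Prop :=
  (1 : A) != 0 /\
  forall x y, invariants B x -> invariants B y -> x * y = 0 -> x = 0 \/ y = 0.

Definition invariants_large (B : (A -> A) -> Prop) : Prop :=
  forall I, Bsubmodule B I -> nonzero_set I ->
    exists2 a, invariants B a & (I a /\ a != 0).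

Definition left_ideal (I : A -> Prop) : Prop :=
  [/\ I 0, (forall x y, I x -> I y -> I (x + y)),
      (forall x, I x -> I (- x)) & (forall a x, I x -> I (a * x))].

Definition left_uniform : Prop :=
  (1 : A) != 0 /\
  forall I J, left_ideal I -> left_ideal J -> nonzero_set I -> nonzero_set J ->
    exists2 x, I x /\ J x & x != 0.

Definition invariants_left_permutable (B : (A -> A) -> Prop) : Prop :=
  forall a s, invariants B s -> s != 0 ->
    exists y, exists b, [/\ invariants B y, y != 0 & b * s = y * a].

Definition invariants_left_nonzerodivisors (B : (A -> A) -> Prop) : Prop :=
  forall s c, invariants B s -> s != 0 -> s * c = 0 -> c = 0.

Definition embeds_into_submodule (B : (A -> A) -> Prop) (N : A -> Prop) : Prop :=
  exists g : A -> A,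
    [/\ forall x y, g (x + y) = g x + g y,
        forall f x, B f -> g (f x) = f (g x),
        forall x y, g x = g y -> x = y
      & forall x, N (g x)].

(* injective B-module homomorphism A -> A/N, represented by a choice of
   representatives g : A -> A: g is additive and B-linear modulo N, and
   its kernel (g x \in N) is zero *)
Definition embeds_into_quotient (B : (A -> A) -> Prop) (N : A -> Prop) : Prop :=
  exists g : A -> A,
    [/\ forall x y, N (g (x + y) - (g x + g y)),
        forall f x, B f -> N (g (f x) - f (g x))
      & forall x, N (g x) -> x = 0].

Definition critically_compressible (B : (A -> A) -> Prop) : Prop :=
  [/\ exists x : A, x != 0,
      (forall N, Bsubmodule B N -> nonzero_set N -> embeds_into_submodule B N)
    & (forall N, Bsubmodule B N -> nonzero_set N -> ~ embeds_into_quotient B N)].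

End Defs.

From HB Require Import structures.
From mathcomp Require Import all_boot all_order all_algebra.
Set Implicit Arguments. Unset Strict Implicit.
Import GRing.Theory.
Local Open Scope ring_scope.

(* Right multiplication by a nonzero invariant s is a B-linear map A -> A with
   image in any submodule containing s; it is injective because its kernel is
   a B-submodule, which would otherwise contain a nonzero invariant t with
   t s = 0.  Conversely, an embedding g of A into A/N is determined modulo N by
   u = g 1, so no nonzero x has x u in N; under either hypothesis (1) or (2)
   every nonzero left ideal N contains such an x u. *)

Lemma left_uniform_meets_principal (k : comPzRingType) (A : algType k)
    (N : A -> Prop) (u : A) :
  left_uniform A -> left_ideal N -> nonzero_set N ->
  exists2 x, N (x * u) & x != 0.
Proof.
move=> [one_nz uniform] idN nzN.
have [->|u_nz] := eqVneq u 0.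
  by exists 1 => //; rewrite mulr0; case: idN.
have idAu : left_ideal (fun y => exists x, y = x * u).
  split.
  - by exists 0; rewrite mul0r.
  - by move=> _ _ [x ->] [y ->]; exists (x + y); rewrite mulrDl.
  - by move=> _ [x ->]; exists (- x); rewrite mulNr.
  - by move=> a _ [x ->]; exists (a * x); rewrite mulrA.
have [|_ [[x ->] Nxu] xu_nz] := uniform _ _ idAu idN _ nzN.
  by exists u => //; exists 1; rewrite mul1r.
by exists x => //; apply: contraNneq xu_nz => ->; rewrite mul0r.
Qed.

Section InvariantsModule.
Variables (k : comPzRingType) (A : algType k) (B : (A -> A) -> Prop).
Hypothesis subB : subalg_End_containing_L B.

Let B_lin f : B f -> klinear f.
Proof. by case: subB => lin _; apply: lin. Qed.
Let B_comp f g : B f -> B g -> B (fun x => f (g x)).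
Proof. by case: subB => _ [_ [_ [_ [_ [comp _]]]]]; apply: comp. Qed.
Let B_L (a : A) : B (fun x => a * x).
Proof. by case: subB => _ [_ [_ [_ [_ [_ L]]]]]. Qed.

Lemma Bmap0 f : B f -> f 0 = 0.
Proof.
move=> /B_lin [f_add _]; apply: (@addrI _ (f 0)).
by rewrite -f_add !addr0.
Qed.

Lemma invariants_mulr s f x : invariants B s -> B f -> f (x * s) = f x * s.
Proof. by move=> inv_s Bf; have := inv_s _ (B_comp Bf (B_L x)); rewrite /= mulr1. Qed.

Lemma Bsubmodule_mull N a x : Bsubmodule B N -> N x -> N (a * x).
Proof. by case=> _ _ _ NB; apply: NB. Qed.

Lemma Bsubmodule_left_ideal N : Bsubmodule B N -> left_ideal N.
Proof. by move=> subN; case: (subN) => *; split=> // a x; apply: Bsubmodule_mull. Qed.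

Lemma Bsubmodule_annihilator s :
  invariants B s -> Bsubmodule B (fun c => c * s = 0).
Proof.
move=> inv_s; split.
- by rewrite mul0r.
- by move=> a b sa sb; rewrite mulrDl sa sb addr0.
- by move=> a sa; rewrite mulNr sa oppr0.
- by move=> f a Bf sa; rewrite -invariants_mulr // sa Bmap0.
Qed.

Lemma invariants_rreg s :
  invariants_domain B -> invariants_large B -> invariants B s -> s != 0 ->
  injective (fun x => x * s).
Proof.
move=> [_ domain] large inv_s s_nz x y /eqP; rewrite -subr_eq0 -mulrBl => /eqP xys.
apply/eqP; rewrite -subr_eq0; apply/negP => /negP xy_nz.
have [|t inv_t [ts t_nz]] := large _ (Bsubmodule_annihilator inv_s).
  by exists (x - y).
by case: (domain t s inv_t inv_s ts) => [t0 | s0];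
  [move: t_nz | move: s_nz]; rewrite ?t0 ?s0 eqxx.
Qed.

Lemma invariants_large_embeds_into_submodule N :
  invariants_domain B -> invariants_large B ->
  Bsubmodule B N -> nonzero_set N -> embeds_into_submodule B N.
Proof.
move=> domB large subN nzN; have [s inv_s [Ns s_nz]] := large N subN nzN.
exists (fun x => x * s); split.
- by move=> x y; apply: mulrDl.
- by move=> f x Bf; rewrite invariants_mulr.
- exact: invariants_rreg.
- by move=> x; apply: Bsubmodule_mull.
Qed.

Lemma embeds_into_quotient_generator N :
  Bsubmodule B N -> embeds_into_quotient B N ->
  exists u, forall x, N (x * u) -> x = 0.
Proof.
move=> [_ N_add _ _] [g [_ g_lin g_inj]]; exists (g 1) => x Nxu.
apply: g_inj; have := N_add _ _ (g_lin _ 1 (B_L x)) Nxu.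
by rewrite mulr1 subrK.
Qed.

Lemma left_permutable_meets_principal N u :
  invariants_left_permutable B -> invariants_large B ->
  Bsubmodule B N -> nonzero_set N -> exists2 x, N (x * u) & x != 0.
Proof.
move=> perm large subN nzN; have [s inv_s [Ns s_nz]] := large N subN nzN.
have [y [b [_ y_nz bs_yu]]] := perm u s inv_s s_nz.
by exists y => //; rewrite -bs_yu; apply: Bsubmodule_mull.
Qed.

End InvariantsModule.

Theorem lemma3p4 (k : comPzRingType) (A : algType k) (B : (A -> A) -> Prop) :
  subalg_End_containing_L B ->
  invariants_domain B ->
  invariants_large B ->
  (left_uniform A \/
   (invariants_left_permutable B /\ invariants_left_nonzerodivisors B)) ->
  critically_compressible B.
Proof.
move=> subB domB large hyp; split.
- by exists 1; case: domB.
- by move=> N; apply: invariants_large_embeds_into_submodule.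
- move=> N subN nzN /(embeds_into_quotient_generator subB subN) [u u_free].
  have [x Nxu x_nz] : exists2 x, N (x * u) & x != 0.
    case: hyp => [uniform | [perm _]].
    + exact: left_uniform_meets_principal (Bsubmodule_left_ideal subB subN) nzN.
    + exact: (left_permutable_meets_principal subB u perm large subN nzN).
  by move: x_nz; rewrite (u_free x Nxu) eqxx.
Qed.
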